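(* Let $y\in\mathbb R^n$ have distinct values $\lambda_1<\cdots<\lambda_s$ with multiplicities $m_1,\ldots,m_s$, and let $0\le\gamma<1$. With $x_n:=1-\gamma-x_1-\cdots-x_{n-1}$, $$\int_0^{1-\gamma}\int_0^{1-\gamma-x_1}\cdots\int_0^{1-\gamma-x_1-\cdots-x_{n-2}}e^{\langle y,x\rangle}\,dx_{n-1}\cdots dx_1=\frac{\det M(y,1-\gamma)}{\prod_{i<j}(\lambda_j-\lambda_i)^{m_im_j}}.$$ Moreover only the final row of $M(y,1-\gamma)$ depends on $\gamma$.
   Context: For $z\in\mathbb R^n$ with distinct values $\kappa_1<\cdots<\kappa_s$ of multiplicities $m_1,\ldots,m_s$ and $c\in\mathbb R$, $M(z,c)$ is the $n\times n$ matrix with columns indexed by pairs $(i,j)$, $1\le i\le s$, $0\le j\le m_i-1$ (lexicographic order), rows $r=0,\ldots,n-2$ plus a final row; the entry in row $r$, column $(i,j)$ is $\binom rj\kappa_i^{r-j}$ ($0$ if $j>r$), and the final-row entry in column $(i,j)$ is $c^je^{c\kappa_i}/j!$. *)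

From HB Require Import structures.
From mathcomp Require Import all_boot all_order all_algebra.
From mathcomp Require Import all_classical all_reals all_analysis.
Set Implicit Arguments. Unset Strict Implicit. Unset Printing Implicit Defensive.
Import Order.TTheory GRing.Theory Num.Theory.
Import numFieldNormedType.Exports.
Local Open Scope classical_set_scope.
Local Open Scope ring_scope.

Section Defs.
Variable R : realType.

(* the distinct values kappa_1 < ... < kappa_s of z (0-indexed list) *)
Definition distinct_vals n (z : 'I_n -> R) : seq R :=
  sort <=%R (undup [seq z i | i <- enum 'I_n]).

Definition nvals n (z : 'I_n -> R) : nat := size (distinct_vals z).

(* kappa_(i+1) (0-indexed) *)
Definition kap n (z : 'I_n -> R) (i : nat) : R := nth 0 (distinct_vals z) i.

Definition mult n (z : 'I_n -> R) (i : nat) : nat :=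
  count (fun k => z k == kap z i) (enum 'I_n).

(* column labels (i,j), 0 <= i < s, 0 <= j < m_i, in lexicographic order *)
Definition col_labels n (z : 'I_n -> R) : seq (nat * nat) :=
  flatten [seq [seq (i, j) | j <- iota 0 (mult z i)] | i <- iota 0 (nvals z)].

Definition Mmat n (z : 'I_n -> R) (c : R) : 'M[R]_n :=
  \matrix_(r < n, col < n)
    let ij := nth (0%N, 0%N) (col_labels z) col in
    let i := ij.1 in let j := ij.2 in
    if (r < n.-1)%N then
      (if (j <= r)%N then ('C(r, j))%:R * kap z i ^+ (r - j) else 0)
    else c ^+ j * expR (c * kap z i) / (j`!)%:R.

(* iterated integral over the simplex:
   simplex_int k t F = int_0^t int_0^(t-u1) ... int_0^(t-u1-..-u_(k-1))
                         F [:: u1; ...; uk; t - u1 - ... - uk] du_k ... du_1 *)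
Fixpoint simplex_int (k : nat) (t : R) (F : seq R -> R) : R :=
  match k with
  | 0 => F [:: t]
  | k'.+1 => \int[@lebesgue_measure R]_(u in `[0, t]%classic)
               simplex_int k' (t - u) (fun xs => F (u :: xs))
  end.

End Defs.

(* Let f(t) be the iterated integral of exp <y, x> over the simplex
   {x >= 0, x_1 + ... + x_n = t}.  Integrating out x_1 exhibits f as the convolution
   int_0^t e^(y_1 u) g(t - u) du of an exponential with the same integral g in the
   remaining variables; by induction f is therefore an exponential polynomial
   sum_(i, j) v_(i,j) t^j e^(kappa_i t) / j! with j < m_i.  Primitives of the terms
   make the convolution explicit (section ExpPolynomials), and the recurrence
   h(0) = 0, h' = a h + g satisfied by h = conv(a, g) shows that the derivatives of f
   at 0 are those of t^(n-1) / (n-1)! (section InitialDerivatives).  Since the k-th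
   derivative at 0 of t^j e^(kappa t) / j! is C(k, j) kappa^(k-j), the coefficient
   vector v solves W v = e_(n-1) for the confluent Vandermonde matrix W, which agrees
   with M(y, c) except on its last row.  Expanding det M(y, c) along the last row and
   using Cramer's rule gives det M(y, c) = det W * f(c) (section SimplexCoefficients),
   and det W = prod_(i<j) (kappa_j - kappa_i)^(m_i m_j) is computed in the Newton
   basis (section ConfluentVandermonde).  The theorem follows at c = 1 - gamma; its
   second claim holds because only the last row of M(y, c) mentions c. *)

From HB Require Import structures.
From mathcomp Require Import all_boot all_order all_algebra.
From mathcomp Require Import all_classical all_reals all_analysis.
From mathcomp Require Import ring.
Import Order.TTheory GRing.Theory Num.Theory.
Import numFieldNormedType.Exports.
Local Open Scope ring_scope.

Set Implicit Arguments. Unset Strict Implicit.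

(* Differentiation rules for real functions written pointwise (as lambda terms), the
   form in which the integrands below occur. *)
Section Derivatives.
Variable R : realType.
Implicit Types (f g : R -> R) (k x df dg : R).

Lemma isd_cst k x : is_derive x 1 (fun _ : R => k) 0.
Proof. exact: is_derive_cst. Qed.

Lemma isd_id x : is_derive x 1 (fun u : R => u) 1.
Proof. exact: is_derive_id. Qed.

Lemma isd_ext f g x df : is_derive x 1 f df -> f = g -> is_derive x 1 g df.
Proof. by move=> h <-. Qed.

Lemma isd_add f g x df dg : is_derive x 1 f df -> is_derive x 1 g dg ->
  is_derive x 1 (fun u => f u + g u) (df + dg).
Proof. exact: is_deriveD. Qed.

Lemma isd_mul f g x df dg : is_derive x 1 f df -> is_derive x 1 g dg ->
  is_derive x 1 (fun u => f u * g u) (f x * dg + g x * df).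
Proof. exact: is_deriveM. Qed.

Lemma isd_scale k f x df : is_derive x 1 f df ->
  is_derive x 1 (fun u => k * f u) (k * df).
Proof. by move=> hf; apply: is_derive_eq (isd_mul (isd_cst k x) hf) _; ring. Qed.

Lemma isd_pow n f x df : is_derive x 1 f df ->
  is_derive x 1 (fun u => f u ^+ n) (n%:R * f x ^+ n.-1 * df).
Proof.
move=> hf; apply: isd_ext (is_deriveX n hf) _.
by apply/funext => u; rewrite exprfctE.
Qed.

Lemma isd_exp g x dg : is_derive x 1 g dg ->
  is_derive x 1 (fun u => expR (g u)) (expR (g x) * dg).
Proof. by move=> hg; apply: (@is_derive1_comp R expR g x _ _ (is_derive_expR _) hg). Qed.

Lemma isd_rev k x : is_derive x 1 (fun u => k - u) (-1).
Proof.
have h := isd_add (isd_cst k x) (isd_scale (-1) (isd_id x)).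
rewrite add0r mulr1 in h; apply: isd_ext h _.
by apply/funext => u; rewrite mulN1r.
Qed.

End Derivatives.

Section ExpPolynomials.
Variable R : realType.
Local Notation mu := (@lebesgue_measure R).

Definition expmon (k : R) (j : nat) (t : R) : R := t ^+ j * expR (t * k) / (j`!)%:R.

Definition expoly (s : seq (R * R * nat)) (t : R) : R :=
  \sum_(x <- s) x.1.1 * expmon x.1.2 x.2 t.

Lemma expoly_cat s1 s2 t : expoly (s1 ++ s2) t = expoly s1 t + expoly s2 t.
Proof. by rewrite /expoly big_cat. Qed.

Lemma expoly_rcons s x t :
  expoly (rcons s x) t = expoly s t + x.1.1 * expmon x.1.2 x.2 t.
Proof. by rewrite -cats1 expoly_cat /expoly big_seq1. Qed.

Lemma fact_neq0 j : (j`!)%:R != 0 :> R.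
Proof. by rewrite pnatr_eq0 -lt0n fact_gt0. Qed.

Lemma derivable_expoly_rev s t u : derivable (fun v => expoly s (t - v)) u 1.
Proof.
suff [df hdf] : exists df, is_derive u 1 (fun v => expoly s (t - v)) df by case: hdf.
elim: s => [|x s [df IH]].
  by exists 0; apply: isd_ext (isd_cst 0 u) _; apply/funext => v; rewrite /expoly big_nil.
have dmon := isd_mul (isd_mul (isd_pow x.2 (isd_rev t u))
  (isd_exp (isd_ext (isd_scale x.1.2 (isd_rev t u)) (funext (fun v => mulrC _ _)))))
  (isd_cst (x.2`!)%:R^-1 u).
eexists; apply: isd_ext (isd_add (isd_scale x.1.1 dmon) IH) _.
by apply/funext => v; rewrite /expoly big_cons.
Qed.

(* For d != 0, a primitive in u of e^(d u) (t - u)^j / j! is e^(d u) * pprim d t j u. *)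
Fixpoint pprim (d t : R) (j : nat) (u : R) : R :=
  match j with
  | 0 => d^-1
  | j'.+1 => d^-1 * ((t - u) ^+ j / (j`!)%:R + pprim d t j' u)
  end.

Lemma is_derive_pprim (d t : R) j (u : R) : d != 0 ->
  is_derive u 1 (fun v => expR (d * v) * pprim d t j v)
    (expR (d * u) * ((t - u) ^+ j / (j`!)%:R)).
Proof.
move=> d0; have dexp := isd_exp (isd_scale d (isd_id u)).
elim: j => [|j IH].
  apply: is_derive_eq (isd_mul dexp (isd_cst d^-1 u)) _.
  by rewrite /= fact0 expr0 divr1; field.
apply: (@isd_ext _ (fun v => d^-1 * (expR (d * v) * ((t - v) ^+ j.+1 / (j.+1`!)%:R)
                                   + expR (d * v) * pprim d t j v))); last first.
  by apply/funext => v /=; ring.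
apply: is_derive_eq (isd_scale _ (isd_add (isd_mul dexp _) IH)) _.
  exact: isd_mul (isd_pow j.+1 (isd_rev t u)) (isd_cst _ u).
have hj := fact_neq0 j.
by rewrite factS natrM /=; field; rewrite d0 hj /= -(natrD R 1 j) pnatr_eq0.
Qed.

(* A primitive in u of e^(a u) * expmon k j (t - u). *)
Definition prim (a k : R) (j : nat) (t u : R) : R :=
  if a == k then - ((t - u) ^+ j.+1 * expR (t * k) / (j.+1`!)%:R)
  else expR (t * k) * (expR ((a - k) * u) * pprim (a - k) t j u).

Lemma is_derive_prim (a k : R) j (t u : R) :
  is_derive u 1 (prim a k j t) (expR (a * u) * expmon k j (t - u)).
Proof.
rewrite /prim /expmon; case: eqP => [<-|/eqP ak].
  have hj := fact_neq0 j.
  have -> : expR (a * u) * ((t - u) ^+ j * expR ((t - u) * a) / (j`!)%:R) =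
            (t - u) ^+ j * expR (t * a) / (j`!)%:R.
    have expE : expR (a * u) * expR ((t - u) * a) = expR (t * a).
      by rewrite -expRD; congr expR; ring.
    by rewrite -expE; ring.
  have h := isd_scale (-1) (isd_mul (isd_pow j.+1 (isd_rev t u))
                                    (isd_cst (expR (t * a) / (j.+1`!)%:R) u)).
  apply: isd_ext (is_derive_eq h _) _.
    by rewrite factS natrM /=; field; rewrite hj /= -(natrD R 1 j) pnatr_eq0.
  by apply/funext => v; rewrite mulN1r mulrA.
have h := isd_scale (expR (t * k)) (is_derive_pprim t j u (_ : a - k != 0)).
apply: is_derive_eq (h _) _; first by rewrite subr_eq0.
have expE : expR (t * k) * expR ((a - k) * u) = expR (a * u) * expR ((t - u) * k).
  by rewrite -!expRD; congr expR; ring.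
by rewrite mulrA expE; ring.
Qed.

(* For a != k, the exponential polynomial c * int_0^t e^(a u) expmon k j (t - u) du. *)
Fixpoint conv_distinct (a k c : R) (j : nat) : seq (R * R * nat) :=
  match j with
  | 0 => [:: (c / (a - k), a, 0%N); (- (c / (a - k)), k, 0%N)]
  | j'.+1 => rcons (conv_distinct a k (c / (a - k)) j') (- (c / (a - k)), k, j)
  end.

(* The exponential polynomial c * int_0^t e^(a u) expmon k j (t - u) du, for x = (c, k, j). *)
Definition conv_term (a : R) (x : R * R * nat) : seq (R * R * nat) :=
  if a == x.1.2 then [:: (x.1.1, x.1.2, x.2.+1)] else conv_distinct a x.1.2 x.1.1 x.2.

(* The exponential polynomial int_0^t e^(a u) expoly s (t - u) du. *)
Definition conv_expoly (a : R) (s : seq (R * R * nat)) : seq (R * R * nat) :=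
  flatten (map (conv_term a) s).

Lemma expoly_conv_distinct (a k t : R) j : a != k -> forall c,
  c * (expR (t * k) * (expR ((a - k) * t) * pprim (a - k) t j t - pprim (a - k) t j 0))
  = expoly (conv_distinct a k c j) t.
Proof.
move=> ak; have expE : expR (t * k) * expR ((a - k) * t) = expR (t * a).
  by rewrite -expRD; congr expR; ring.
elim: j => [|j IH] c.
  rewrite /expoly /= big_cons big_seq1 /expmon /= !expr0 fact0 !mul1r !divr1 -expE; ring.
rewrite /= expoly_rcons -IH /= /expmon subrr expr0n /= mul0r add0r subr0; ring.
Qed.

Lemma prim_increment (a c k t : R) j :
  c * (prim a k j t t - prim a k j t 0) = expoly (conv_term a (c, k, j)) t.
Proof.
rewrite /prim /conv_term /=; case: eqP => [<-|/eqP ak].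
  by rewrite /expoly big_seq1 /expmon /= subrr expr0n /= subr0 !mul0r oppr0 sub0r opprK.
by rewrite -expoly_conv_distinct // mulr0 expR0 mul1r; ring.
Qed.

Lemma expoly_conv (a t : R) s :
  expoly (conv_expoly a s) t = \sum_(x <- s) expoly (conv_term a x) t.
Proof.
elim: s => [|x s IH]; first by rewrite /expoly /conv_expoly !big_nil.
by rewrite /conv_expoly /= expoly_cat big_cons -IH.
Qed.

Lemma integral_primitive (f F : R -> R) (a b : R) : a <= b ->
  (forall x : R, is_derive x 1 F (f x)) -> (forall x : R, derivable f x 1) ->
  \int[mu]_(x in `[a, b]) f x = F b - F a.
Proof.
move=> ab dF df.
have cF : continuous F.
  by move=> x; apply/differentiable_continuous/derivable1_diffP; case: (dF x).
have cf : continuous f.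
  by move=> x; apply/differentiable_continuous/derivable1_diffP.
move: ab; rewrite le_eqVlt => /predU1P[<-|ab].
  by rewrite set_itv1 Rintegral_set1 subrr.
rewrite /Rintegral (@continuous_FTC2 R f F a b ab) //.
- exact: continuous_subspaceT.
- split; first by move=> x _; case: (dF x).
  + exact: cvg_at_right_filter (cF a).
  + exact: cvg_at_left_filter (cF b).
- by move=> x _; rewrite derive1E; case: (dF x).
Qed.

Lemma is_derive_sum_prim (a t u : R) s :
  is_derive u 1 (fun v => \sum_(x <- s) x.1.1 * prim a x.1.2 x.2 t v)
    (\sum_(x <- s) x.1.1 * (expR (a * u) * expmon x.1.2 x.2 (t - u))).
Proof.
elim: s => [|x s IH].
  by rewrite big_nil; apply: isd_ext (isd_cst 0 u) _; apply/funext => v; rewrite big_nil.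
rewrite big_cons; apply: isd_ext (isd_add (isd_scale x.1.1 (is_derive_prim a x.1.2 x.2 t u)) IH) _.
by apply/funext => v; rewrite big_cons.
Qed.

Lemma integral_conv (a c t : R) s : 0 <= t ->
  \int[mu]_(u in `[0, t]) (expR (c + a * u) * expoly s (t - u))
  = expR c * expoly (conv_expoly a s) t.
Proof.
move=> t0.
pose F u := expR c * \sum_(x <- s) x.1.1 * prim a x.1.2 x.2 t u.
have dF (x : R) : is_derive x 1 F (expR (c + a * x) * expoly s (t - x)).
  apply: is_derive_eq (isd_scale _ (is_derive_sum_prim a t x s)) _.
  rewrite expRD /expoly -mulrA !big_distrr; apply: eq_bigr => y _ /=; ring.
have df (x : R) : derivable (fun u => expR (c + a * u) * expoly s (t - u)) x 1.
  apply: derivableM; last exact: derivable_expoly_rev.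
  by case: (isd_exp (isd_add (isd_cst c x) (isd_scale a (isd_id x)))).
rewrite (integral_primitive t0 dF df) /F -mulrBr -sumrB expoly_conv.
by congr (_ * _); apply: eq_bigr => -[[c' k] j] _; rewrite -mulrBr prim_increment.
Qed.

Definition exp_affine (ys : seq R) (c : R) (xs : seq R) : R :=
  expR (c + \sum_(i < size ys) ys`_i * xs`_i).

(* The exponential polynomial t |-> simplex integral of exp <ys, x> over the simplex
   of size t, obtained by one convolution per variable. *)
Fixpoint simplex_expoly (ys : seq R) : seq (R * R * nat) :=
  match ys with
  | [::] => [::]
  | y :: ys' => if ys' is [::] then [:: (1, y, 0%N)] else conv_expoly y (simplex_expoly ys')
  end.

Lemma simplex_int_exp_affine k (ys : seq R) (c t : R) : size ys = k.+1 -> 0 <= t ->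
  simplex_int k t (exp_affine ys c) = expR c * expoly (simplex_expoly ys) t.
Proof.
elim: k ys c t => [|k IH] [|y ys] c t //=.
  case: ys => // _ _; rewrite /exp_affine /= big_ord_recl big_ord0 addr0 /expoly big_seq1.
  by rewrite /expmon /= expr0 fact0 divr1 !mul1r expRD [t * y]mulrC.
case: ys => [//|y' ys] [sz] t0; set ys' := y' :: ys.
have shift_first u : (fun xs => exp_affine (y :: ys') c (u :: xs)) = exp_affine ys' (c + y * u).
  apply/funext => xs; rewrite /exp_affine /= big_ord_recl /= addrA.
  by congr (expR (_ + _)); apply: eq_bigr => i _.
transitivity (\int[mu]_(u in `[0, t]) (expR (c + y * u) * expoly (simplex_expoly ys') (t - u)));
  last by rewrite integral_conv.
apply: eq_Rintegral => u; rewrite inE /= in_itv /= => /andP[_ ut].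
by rewrite shift_first IH //= ?sz // subr_ge0.
Qed.

End ExpPolynomials.

(* The derivatives at 0 of an exponential polynomial, computed formally. They satisfy
   the recurrences of the convolution g = conv_expoly a f, namely g(0) = 0 and
   g' = a g + f, which pins down the initial derivatives of the simplex integral. *)
Section InitialDerivatives.
Variable R : realType.

(* The k-th derivative at 0 of expmon q j. *)
Definition der0_mon (k : nat) (q : R) (j : nat) : R := ('C(k, j))%:R * q ^+ (k - j).

Definition der0 (k : nat) (s : seq (R * R * nat)) : R :=
  \sum_(x <- s) x.1.1 * der0_mon k x.1.2 x.2.

Lemma der0_mon00 q : der0_mon 0 q 0 = 1.
Proof. by rewrite /der0_mon bin0 expr0 mulr1. Qed.

Lemma der0_mon0S q j : der0_mon 0 q j.+1 = 0.
Proof. by rewrite /der0_mon bin0n mul0r. Qed.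

Lemma der0_monS0 k q : der0_mon k.+1 q 0 = q * der0_mon k q 0.
Proof. by rewrite /der0_mon !bin0 !subn0 exprS; ring. Qed.

Lemma der0_monSS k q j :
  der0_mon k.+1 q j.+1 = q * der0_mon k q j.+1 + der0_mon k q j.
Proof.
rewrite /der0_mon binS natrD subSS mulrDl; congr (_ + _).
case: (ltnP j k) => jk; first by rewrite -(subnSK jk) exprS; ring.
by rewrite bin_small ?ltnS // !mul0r mulr0.
Qed.

Lemma der0_cat k s1 s2 : der0 k (s1 ++ s2) = der0 k s1 + der0 k s2.
Proof. by rewrite /der0 big_cat. Qed.

Lemma der0_rcons k s x : der0 k (rcons s x) = der0 k s + x.1.1 * der0_mon k x.1.2 x.2.
Proof. by rewrite -cats1 der0_cat /der0 big_seq1. Qed.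

Lemma der0_conv_distinct (a q : R) j : a != q -> forall c,
  der0 0 (conv_distinct a q c j) = 0 /\
  forall k, der0 k.+1 (conv_distinct a q c j)
            = a * der0 k (conv_distinct a q c j) + c * der0_mon k q j.
Proof.
move=> aq; have d0 : a - q != 0 by rewrite subr_eq0.
elim: j => [|j IH] c.
  rewrite /der0 /= !big_cons !big_nil /= !der0_mon00; split=> [|k]; first by ring.
  by rewrite !big_cons !big_nil /= !der0_monS0; field.
have [IH0 IHS] := IH (c / (a - q)).
rewrite /= der0_rcons IH0 /= der0_mon0S; split=> [|k]; first by ring.
by rewrite !der0_rcons IHS /= der0_monSS; field.
Qed.

Lemma der0_conv (a : R) s :
  der0 0 (conv_expoly a s) = 0 /\
  forall k, der0 k.+1 (conv_expoly a s) = a * der0 k (conv_expoly a s) + der0 k s.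
Proof.
elim: s => [|x s [IH0 IHS]].
  by rewrite /conv_expoly /der0 /= !big_nil; split => // k; rewrite !big_nil mulr0 addr0.
have [X0 XS] : der0 0 (conv_term a x) = 0 /\
  forall k, der0 k.+1 (conv_term a x) = a * der0 k (conv_term a x) + x.1.1 * der0_mon k x.1.2 x.2.
  rewrite /conv_term; case: eqP => [<-|/eqP ax]; last exact: der0_conv_distinct.
  rewrite /der0 !big_seq1 /= der0_mon0S mulr0; split => // k.
  by rewrite !big_seq1 /= der0_monSS; ring.
rewrite /conv_expoly /= -/(conv_expoly a s) !der0_cat X0 IH0 addr0; split => // k.
by rewrite !der0_cat XS IHS /der0 big_cons; ring.
Qed.

Lemma der0_simplex (ys : seq R) k : (k < size ys)%N ->
  der0 k (simplex_expoly ys) = (k == (size ys).-1)%:R.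
Proof.
elim: ys k => [//|y [|y' ys] IH] k.
  by case: k => //= _; rewrite /der0 big_seq1 /= der0_mon00 mulr1.
have [C0 CS] := der0_conv y (simplex_expoly (y' :: ys)).
rewrite [size _]/=; elim: k => [|k IHk] hk; first by rewrite C0.
rewrite /= CS IHk 1?ltnW // IH //= (_ : (k == (size ys).+1) = false) ?mulr0 ?add0r //.
by apply/negbTE; rewrite neq_ltn -ltnS hk.
Qed.

Lemma conv_distinct_mem (a q : R) j c x : x \in conv_distinct a q c j ->
  (x.1.2 = a /\ x.2 = 0%N) \/ (x.1.2 = q /\ (x.2 <= j)%N).
Proof.
elim: j c => [|j IH] c; first by rewrite !inE => /orP[] /eqP -> /=; [left|right].
rewrite /= mem_rcons inE => /orP[/eqP -> /=|/IH]; first by right.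
by case=> [h|[h1 h2]]; [left | right; split => //; apply: leq_trans h2 _].
Qed.

Lemma simplex_expoly_deg (ys : seq R) x : x \in simplex_expoly ys ->
  (x.2 < count (pred1 x.1.2) ys)%N.
Proof.
elim: ys x => [//|y [|y' ys] IH] x; first by rewrite inE => /eqP -> /=; rewrite eqxx.
move=> /flatten_mapP [x0 /IH deg0]; rewrite [count _ (y :: _)]/= /conv_term.
case: eqP => [yx|/eqP yx]; first by rewrite inE => /eqP -> /=; rewrite yx eqxx add1n ltnS.
move=> /conv_distinct_mem [[-> ->]|[-> h]] /=; first by rewrite eqxx.
by rewrite (negbTE yx) add0n; apply: leq_ltn_trans h deg0.
Qed.

End InitialDerivatives.

Section HasseDerivatives.
Variable R : comNzRingType.

Lemma nderivn_mulXsubC (p : {poly R}) c j :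
  (p * ('X - c%:P))^`N(j.+1) = p^`N(j) + p^`N(j.+1) * ('X - c%:P).
Proof.
have -> : p * ('X - c%:P) = (p * 'X + 0%:P) - c *: p.
  by rewrite polyC0 addr0 mulrBr -mul_polyC [c%:P * p]mulrC.
rewrite linearB /= nderivnMXaddC nderivnZ mulrBr -addrA; congr (_ + _).
by rewrite -mul_polyC [c%:P * _]mulrC.
Qed.

Lemma horner_nderivn_mulXsubCn (p : {poly R}) c m j :
  ((p * ('X - c%:P) ^+ m)^`N(j)).[c] = if (j < m)%N then 0 else (p^`N(j - m)).[c].
Proof.
elim: m j => [|m IH] j; first by rewrite expr0 mulr1 subn0.
rewrite exprSr mulrA; case: j => [|j].
  by rewrite nderivn0 hornerM hornerXsubC subrr mulr0.
by rewrite nderivn_mulXsubC hornerD hornerM hornerXsubC subrr mulr0 addr0 IH.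
Qed.

End HasseDerivatives.

Lemma sum_count_uniq (T : eqType) (dv ys : seq T) : uniq dv -> {subset ys <= dv} ->
  (\sum_(k <- dv) count (pred1 k) ys)%N = size ys.
Proof.
move=> udv sub; rewrite -sum1_size.
under eq_bigr => k _ do rewrite -sum1_count big_mkcond /=.
rewrite exchange_big /=; apply: eq_big_seq => x /sub xdv.
by rewrite -big_mkcond sum1_count (eq_count (fun k => eq_sym x k)) count_uniq_mem // xdv.
Qed.

(* Combinatorics of the column labels (i, j) of M(y, c): the columns form s consecutive
   blocks, block i having m_i columns starting at [block_start i]. *)
Section ColumnLabels.
Variable R : realType.
Variables (n : nat) (y : 'I_n -> R).

Local Notation vals := [seq y i | i <- enum 'I_n].
Local Notation dv := (distinct_vals y).
Local Notation s := (nvals y).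
Local Notation m := (mult y).
Local Notation lab := (col_labels y).

Lemma distinct_vals_uniq : uniq dv.
Proof. by rewrite /distinct_vals sort_uniq undup_uniq. Qed.

Lemma mem_distinct_vals x : (x \in dv) = (x \in vals).
Proof. by rewrite /distinct_vals mem_sort mem_undup. Qed.

Lemma mult_count i : m i = count (pred1 (kap y i)) vals.
Proof. by rewrite /mult [RHS]count_map. Qed.

Lemma size_col_labels : size lab = n.
Proof.
rewrite /col_labels size_allpairs_dep sumnE big_map.
transitivity (\sum_(k <- dv) count (pred1 k) vals)%N; last first.
  rewrite sum_count_uniq; [by rewrite size_map size_enum_ord | exact: distinct_vals_uniq |].
  by move=> u; rewrite mem_distinct_vals.
rewrite [RHS](big_nth 0) /index_iota subn0; apply: eq_bigr => i _.
by rewrite size_iota mult_count.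
Qed.

Lemma mem_col_labels i j : ((i, j) \in lab) = (i < s)%N && (j < m i)%N.
Proof.
apply/allpairsPdep/andP.
  by move=> [i' [j' [hi hj [-> ->]]]]; move: hi hj; rewrite !mem_iota.
by move=> [hi hj]; exists i, j; rewrite !mem_iota.
Qed.

Lemma col_labels_uniq : uniq lab.
Proof.
apply: allpairs_uniq_dep; first exact: iota_uniq.
  by move=> i _; exact: iota_uniq.
by move=> [i1 j1] [i2 j2] _ _ /= [-> ->].
Qed.

Definition block_start (i : nat) : nat := (\sum_(i' < i) m i')%N.

Lemma nth_col_labels i j : (i < s)%N -> (j < m i)%N ->
  nth (0%N, 0%N) lab (block_start i + j) = (i, j) /\ (block_start i + j < n)%N.
Proof.
move=> hi hj.
have hiota : iota 0 s = iota 0 i ++ i :: iota i.+1 (s - i.+1).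
  by rewrite -{1}(subnKC (ltnW hi)) -subnSK // iotaD.
pose blocks k l := flatten [seq [seq (i', j') | j' <- iota 0 (m i')] | i' <- iota k l].
have split_lab : lab = blocks 0 i ++ [seq (i, j') | j' <- iota 0 (m i)] ++ blocks i.+1 (s - i.+1)%N.
  by rewrite /col_labels hiota map_cat flatten_cat.
have spre : size (blocks 0 i) = block_start i.
  rewrite size_allpairs_dep /block_start sumnE big_map -(big_mkord xpredT m).
  by rewrite /index_iota subn0; apply: eq_bigr => k _; rewrite size_iota.
split; first by rewrite split_lab nth_cat spre ltnNge leq_addr /= addKn nth_cat
  size_map size_iota hj (nth_map 0%N) ?size_iota // nth_iota.
rewrite -size_col_labels split_lab !size_cat spre size_map size_iota ltn_add2l.
exact: ltn_addr hj.
Qed.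

Lemma col_label_block (col : nat) : (col < n)%N ->
  let ij := nth (0%N, 0%N) lab col in
  [/\ (ij.1 < s)%N, (ij.2 < m ij.1)%N & col = (block_start ij.1 + ij.2)%N].
Proof.
move=> hc /=.
have : nth (0%N, 0%N) lab col \in lab by rewrite mem_nth // size_col_labels.
case E : (nth (0%N, 0%N) lab col) => [i j]; rewrite mem_col_labels => /andP[hi hj].
split => //; have [h1 h2] := nth_col_labels hi hj.
apply/eqP; rewrite -(nth_uniq (0%N, 0%N) _ _ col_labels_uniq) ?size_col_labels //.
by rewrite h1 E.
Qed.

(* The value of column l: kappa_i repeated m_i times, block after block. *)
Definition node (l : nat) : R := kap y (nth (0%N, 0%N) lab l).1.

Lemma node_block i j : (i < s)%N -> (j < m i)%N -> node (block_start i + j) = kap y i.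
Proof. by move=> hi hj; rewrite /node (nth_col_labels hi hj).1. Qed.

Lemma prod_nodes (G : R -> R) i : (i <= s)%N ->
  \prod_(0 <= l < block_start i) G (node l) = \prod_(i' < i) G (kap y i') ^+ m i'.
Proof.
elim: i => [|i IH] hi.
  by rewrite [block_start 0]big_ord0 big_ord0 big_geq.
have startS : block_start i.+1 = (block_start i + m i)%N by rewrite /block_start big_ord_recr.
rewrite big_ord_recr -IH 1?ltnW // startS (@big_cat_nat _ _ _ (block_start i)) ?leq_addr //.
congr (_ * _); rewrite -{1}(add0n (block_start i)) big_addn addKn.
rewrite (@eq_big_nat _ _ _ 0 (m i) _ (fun _ => G (kap y i))) ?prodr_const_nat ?subn0 //.
by move=> l /andP[_ hl]; rewrite addnC node_block.
Qed.

End ColumnLabels.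

(* The confluent Vandermonde matrix W: column (i, j) lists the derivatives at 0 of
   expmon kappa_i j. Its determinant is computed by the Newton basis: the matrix of
   Hasse derivatives at the nodes of the Newton polynomials is triangular, and it is
   obtained from W by a unitriangular change of basis. *)
Section ConfluentVandermonde.
Variable R : realType.
Variables (n : nat) (y : 'I_n -> R).

Local Notation s := (nvals y).
Local Notation m := (mult y).
Local Notation lab := (col_labels y).
Local Notation li col := (nth (0%N, 0%N) lab col).1.
Local Notation lj col := (nth (0%N, 0%N) lab col).2.

Definition conf_vdm : 'M[R]_n := \matrix_(r, col) der0_mon r (kap y (li col)) (lj col).

Definition newton (r : nat) : {poly R} := \prod_(0 <= l < r) ('X - (node y l)%:P).

Definition hasse (p : {poly R}) (col : 'I_n) : R := (p^`N(lj col)).[kap y (li col)].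

Definition hasse_newton : 'M[R]_n := \matrix_(r, col) hasse (newton r) col.

Definition newton_coefs : 'M[R]_n := \matrix_(r, k) (newton r)`_k.

Lemma size_newton r : size (newton r) = r.+1.
Proof. by rewrite /newton size_prod_XsubC size_iota subn0. Qed.

Lemma hasse_expand (p : {poly R}) (col : 'I_n) : (size p <= n)%N ->
  hasse p col = \sum_(k < n) p`_k * der0_mon k (kap y (li col)) (lj col).
Proof.
move=> sp; have pE : p = \sum_(k < n) p`_k *: 'X^k.
  rewrite -poly_def; apply/polyP => k; rewrite coef_poly; case: ltnP => // hk.
  by rewrite nth_default // (leq_trans sp hk).
rewrite /hasse {1}pE linear_sum horner_sum; apply: eq_bigr => k _.
by rewrite linearZ /= nderivnXn hornerZ hornerMn hornerXn /der0_mon mulr_natl.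
Qed.

Lemma hasse_newtonE : hasse_newton = newton_coefs *m conf_vdm.
Proof.
apply/matrixP => r col; rewrite !mxE hasse_expand ?size_newton //.
by apply: eq_bigr => k _; rewrite !mxE.
Qed.

Lemma det_newton_coefs : \det newton_coefs = 1.
Proof.
rewrite det_trig; last first.
  by apply/is_trig_mxP => i j hij; rewrite mxE nth_default // size_newton.
rewrite big1 // => i _; rewrite mxE.
have := lead_coef_prod_XsubC (index_iota 0 i) xpredT (node y).
by rewrite /lead_coef -/(newton i) size_newton.
Qed.

Lemma newton_split a r : (a <= r)%N ->
  newton r = newton a * \prod_(a <= l < r) ('X - (node y l)%:P).
Proof. by move=> ar; rewrite /newton (@big_cat_nat _ _ _ a). Qed.

Lemma newton_block i j : (i < s)%N -> (j <= m i)%N ->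
  newton (block_start y i + j) = newton (block_start y i) * ('X - (kap y i)%:P) ^+ j.
Proof.
move=> hi hj; rewrite (newton_split (leq_addr j _)); congr (_ * _).
rewrite -{1}(add0n (block_start y i)) big_addn addKn.
rewrite (@eq_big_nat _ _ _ 0 j _ (fun _ => 'X - (kap y i)%:P)) ?prodr_const_nat ?subn0 //.
move=> l /andP[_ hl]; rewrite addnC node_block //; exact: leq_trans hl hj.
Qed.

(* The (r, col) entry vanishes for col < r: newton r has a root of order > j at kappa_i. *)
Lemma hasse_newton_upper (r col : 'I_n) : (col < r)%N -> hasse_newton r col = 0.
Proof.
move=> cr; rewrite mxE /hasse.
have [hi hj ec] := col_label_block y (ltn_ord col).
have hr : (block_start y (li col) + (lj col).+1 <= r)%N by rewrite addnS -ec.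
by rewrite (newton_split hr) (newton_block hi hj) mulrAC horner_nderivn_mulXsubCn ltnSn.
Qed.

Lemma hasse_newton_diag (p : 'I_n) :
  hasse_newton p p = (newton (block_start y (li p))).[kap y (li p)].
Proof.
rewrite mxE /hasse; have [hi hj ec] := col_label_block y (ltn_ord p).
have -> : newton p = newton (block_start y (li p)) * ('X - (kap y (li p))%:P) ^+ lj p.
  by rewrite -(newton_block hi (ltnW hj)) -ec.
by rewrite horner_nderivn_mulXsubCn ltnn subnn nderivn0.
Qed.

Lemma det_conf_vdm_blocks :
  \det conf_vdm = \prod_(i < s) (\prod_(i' < i) (kap y i - kap y i') ^+ m i') ^+ m i.
Proof.
have -> : \det conf_vdm = \det hasse_newton.
  by rewrite hasse_newtonE det_mulmx det_newton_coefs mul1r.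
rewrite -det_tr det_trig; last first.
  by apply/is_trig_mxP => i j hij; rewrite mxE hasse_newton_upper.
pose d (ij : nat * nat) := (newton (block_start y ij.1)).[kap y ij.1].
rewrite (eq_bigr (fun p : 'I_n => d (nth (0%N, 0%N) lab p))); last first.
  by move=> p _; rewrite mxE hasse_newton_diag.
rewrite -(big_mkord xpredT (fun p => d (nth (0%N, 0%N) lab p))).
rewrite -{1}(size_col_labels y) -(big_nth (0%N, 0%N) xpredT d).
have iotaE k : iota 0 k = index_iota 0 k by rewrite /index_iota subn0.
rewrite /col_labels big_allpairs_dep /= iotaE big_mkord; apply: eq_bigr => i _.
rewrite iotaE /d /= prodr_const_nat subn0; congr (_ ^+ _).
rewrite /newton horner_prod.
under eq_bigr => l _ do rewrite hornerXsubC.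
by rewrite (prod_nodes (y := y) (fun z => kap y i - z) (ltnW (ltn_ord i))).
Qed.

Definition vdm_factor : R := \prod_(i < s) \prod_(j < s | (i < j)%N)
  (kap y j - kap y i) ^+ (m i * m j).

Lemma det_conf_vdm : \det conf_vdm = vdm_factor.
Proof.
rewrite det_conf_vdm_blocks /vdm_factor.
under [RHS]eq_bigr => i _ do rewrite big_mkcond /=.
rewrite [RHS]exchange_big /=; apply: eq_bigr => j _.
rewrite -prodrXl (big_ord_widen_cond s xpredT (fun i => (kap y j - kap y i) ^+ m i ^+ m j)
  (ltnW (ltn_ord j))) big_mkcond /=.
by apply: eq_bigr => i _; case: ifP => // _; rewrite exprM.
Qed.

Lemma vdm_factor_neq0 : vdm_factor != 0.
Proof.
apply/prodf_neq0 => i _; apply/prodf_neq0 => j hij.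
rewrite expf_neq0 // subr_eq0 /kap nth_uniq ?ltn_ord ?distinct_vals_uniq //.
by apply/negP => /eqP /val_inj ji; move: hij; rewrite ji ltnn.
Qed.

End ConfluentVandermonde.

(* The coefficients of the simplex integral in the basis of the columns of M(y, c) solve
   W v = e_(n-1); expanding det M(y, c) along its last row and using Cramer's rule gives
   det M(y, c) = det W * (value of the simplex integral at c). *)
Section SimplexCoefficients.
Variable R : realType.
Variables (n' : nat) (y : 'I_n'.+1 -> R).

Local Notation n := n'.+1.
Local Notation lab := (col_labels y).
Local Notation dv := (distinct_vals y).
Local Notation vals := [seq y i | i <- enum 'I_n].
Local Notation T := (simplex_expoly vals).

Definition label_of (x : R * R * nat) : nat * nat := (index x.1.2 dv, x.2).

Lemma label_ofP x : x \in T -> label_of x \in lab /\ kap y (label_of x).1 = x.1.2.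
Proof.
move=> xT; have deg := simplex_expoly_deg xT.
have xdv : x.1.2 \in dv.
  by rewrite mem_distinct_vals -has_pred1 has_count (leq_ltn_trans (leq0n _) deg).
have kx : kap y (index x.1.2 dv) = x.1.2 by rewrite /kap nth_index.
by rewrite mem_col_labels index_mem xdv mult_count kx.
Qed.

Definition coef_vec : 'cV[R]_n :=
  \col_(col < n) \sum_(x <- T | label_of x == nth (0%N, 0%N) lab col) x.1.1.

Lemma sum_by_label (h : nat * nat -> R) :
  \sum_(x <- T) x.1.1 * h (label_of x)
  = \sum_(col < n) coef_vec col 0 * h (nth (0%N, 0%N) lab col).
Proof.
under [RHS]eq_bigr => col _ do rewrite mxE big_distrl /= big_mkcond /=.
rewrite exchange_big /= big_seq [RHS]big_seq; apply: eq_bigr => x xT.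
have [lin _] := label_ofP xT.
have hidx : (index (label_of x) lab < n)%N.
  by have := index_mem (label_of x) lab; rewrite size_col_labels lin.
rewrite (bigD1 (Ordinal hidx)) //= nth_index // eqxx big1 ?addr0 // => col ncol.
rewrite -(nth_index (0%N, 0%N) lin) nth_uniq ?size_col_labels ?col_labels_uniq //.
by rewrite ifN // eq_sym; apply: contra ncol => /eqP eqcol; apply/eqP/val_inj.
Qed.

Lemma expoly_simplex t : expoly T t
  = \sum_(col < n) coef_vec col 0 * expmon (kap y (nth (0%N, 0%N) lab col).1)
                                           (nth (0%N, 0%N) lab col).2 t.
Proof.
rewrite -(sum_by_label (fun ij => expmon (kap y ij.1) ij.2 t)) /expoly.
by rewrite big_seq [RHS]big_seq; apply: eq_bigr => x xT; have [_ ->] := label_ofP xT.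
Qed.

Definition last_unit : 'cV[R]_n := \col_(k < n) ((k : nat) == n')%:R.

Lemma conf_vdm_coef_vec : conf_vdm y *m coef_vec = last_unit.
Proof.
apply/matrixP => k z; rewrite ord1 !mxE.
transitivity (der0 k T); last by rewrite der0_simplex size_map size_enum_ord.
rewrite /der0 [RHS]big_seq.
under [RHS]eq_bigr => x xT do rewrite -(label_ofP xT).2.
rewrite -[RHS]big_seq (sum_by_label (fun ij => der0_mon k (kap y ij.1) ij.2)).
by apply: eq_bigr => col _; rewrite mxE mulrC.
Qed.

(* Expansion of det M(y, c) along its last row, whose cofactors are those of W. *)
Lemma det_Mmat (c : R) : \det (Mmat y c) = \det (conf_vdm y) * expoly T c.
Proof.
rewrite (expand_det_row _ ord_max) expoly_simplex big_distrr /=; apply: eq_bigr => col _.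
have cofE : cofactor (Mmat y c) ord_max col = cofactor (conf_vdm y) ord_max col.
  rewrite /cofactor; congr (_ * \det _); apply/matrixP => a b; rewrite !mxE /=.
  have -> : bump n' a = a by rewrite /bump leqNgt (ltn_ord a).
  rewrite (ltn_ord a) /der0_mon; case: leqP => // ltab.
  by rewrite bin_small // mul0r.
have cramer : cofactor (conf_vdm y) ord_max col = \det (conf_vdm y) * coef_vec col 0.
  have adjE : \det (conf_vdm y) *: coef_vec = \adj (conf_vdm y) *m last_unit.
    by rewrite -conf_vdm_coef_vec mulmxA mul_adj_mx mul_scalar_mx.
  have := congr1 (fun v : 'cV[R]_n => v col 0) adjE; rewrite !mxE => ->.
  rewrite (bigD1 ord_max) //= !mxE eqxx mulr1 big1 ?addr0 // => k hk.
  by rewrite !mxE (_ : (k == n' :> nat) = false) ?mulr0 //; apply/negbTE: hk.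
by rewrite cofE cramer mxE /= ltnn /expmon; ring.
Qed.

End SimplexCoefficients.

Unset Implicit Arguments. Set Strict Implicit.

Theorem mainTheorem10 (R : realType) (n : nat) (y : 'I_n -> R) (gamma : R) :
  (0 < n)%N -> 0 <= gamma -> gamma < 1 ->
  simplex_int n.-1 (1 - gamma)
      (fun x => expR (\sum_(i < n) y i * nth 0 x i))
    = \det (Mmat y (1 - gamma)) /
      \prod_(i < nvals y) \prod_(j < nvals y | (i < j)%N)
         (kap y j - kap y i) ^+ (mult y i * mult y j)
  /\ (forall (c1 c2 : R) (r col : 'I_n), (r < n.-1)%N ->
        Mmat y c1 r col = Mmat y c2 r col).
Proof.
move=> n_gt0 gamma_ge0 gamma_lt1; split; last first.
  by move=> c1 c2 r col r_lt; rewrite !mxE /= r_lt.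
case: n y n_gt0 => [//|n'] y _.
have t_ge0 : 0 <= 1 - gamma by rewrite subr_ge0 ltW.
pose vals := [seq y i | i <- enum 'I_n'.+1].
have size_vals : size vals = n'.+1 by rewrite size_map size_enum_ord.
have integrandE : (fun x => expR (\sum_(i < n'.+1) y i * nth 0 x i)) = exp_affine vals 0.
  apply/funext => x; rewrite /exp_affine add0r size_vals; congr expR.
  by apply: eq_bigr => i _; rewrite (nth_map i) ?size_enum_ord // nth_ord_enum.
rewrite integrandE simplex_int_exp_affine // expR0 mul1r.
rewrite -/(vdm_factor y) -det_conf_vdm det_Mmat mulrC mulKf //.
by rewrite det_conf_vdm vdm_factor_neq0.
Qed.
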